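(* Let $\mathcal{C}$ be a deflation-exact category and let $\mathcal{A}$ be a full subcategory of $\mathcal{C}$ satisfying axioms (A1) and (A3). Then the composition of two $\mathcal{A}^{-1}$-inflations is again an $\mathcal{A}^{-1}$-inflation.
   Context: A conflation category is an additive category with a class of kernel-cokernel pairs (closed under isomorphisms) called conflations; first map an inflation, second a deflation. A deflation-exact category is a conflation category satisfying: (R0) $1_0$ is a deflation; (R1) composites of deflations are deflations; (R2) pullbacks of deflations along arbitrary morphisms exist and are deflations. (A1): for every conflation $A'\rightarrowtail A\twoheadrightarrow A''$ in $\mathcal{C}$, $A\in\mathcal{A}$ iff $A',A''\in\mathcal{A}$. (A3): if $a\colon C\rightarrowtail D$ is an inflation and $b\colon C\twoheadrightarrow A$ a deflation with $A\in\mathcal{A}$, then the pushout of $a$ along $b$ exists and yields a deflation $D\twoheadrightarrow P$ and an inflation $A\rightarrowtail P$. An $\mathcal{A}^{-1}$-inflation is an inflation whose cokernel lies in $\mathcal{A}$. *)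

From HB Require Import structures.
From mathcomp Require Import all_boot all_algebra.
Set Implicit Arguments. Unset Strict Implicit. Unset Printing Implicit Defensive.
Import GRing.Theory.
Local Open Scope ring_scope.

Record AddCat := {
  Ob : Type;
  Mor : Ob -> Ob -> zmodType;
  idm : forall X, Mor X X;
  mcomp : forall X Y Z, Mor Y Z -> Mor X Y -> Mor X Z;
  compA : forall W X Y Z (h : Mor Y Z) (g : Mor X Y) (f : Mor W X),
      mcomp h (mcomp g f) = mcomp (mcomp h g) f;
  comp1m : forall X Y (f : Mor X Y), mcomp (idm Y) f = f;
  compm1 : forall X Y (f : Mor X Y), mcomp f (idm X) = f;
  compDl : forall X Y Z (g1 g2 : Mor Y Z) (f : Mor X Y),
      mcomp (g1 + g2) f = mcomp g1 f + mcomp g2 f;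
  compDr : forall X Y Z (g : Mor Y Z) (f1 f2 : Mor X Y),
      mcomp g (f1 + f2) = mcomp g f1 + mcomp g f2;
  zero_ob : Ob;
  zero_ob_id : idm zero_ob = 0;
  biprod_ex : forall X Y, exists S (i1 : Mor X S) (i2 : Mor Y S)
      (p1 : Mor S X) (p2 : Mor S Y),
      [/\ mcomp p1 i1 = idm X, mcomp p2 i2 = idm Y, mcomp p1 i2 = 0,
          mcomp p2 i1 = 0 & mcomp i1 p1 + mcomp i2 p2 = idm S]
}.

Arguments Mor : clear implicits.
Arguments idm {_} X.
Arguments mcomp {_ X Y Z} g f.

Section Notions.
Variable C : AddCat.

Definition is_iso (X Y : Ob C) (f : Mor C X Y) : Prop :=
  exists g : Mor C Y X, mcomp g f = idm X /\ mcomp f g = idm Y.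

Definition is_kernel (X Y Z : Ob C) (f : Mor C X Y) (g : Mor C Y Z) : Prop :=
  mcomp g f = 0 /\
  forall W (h : Mor C W Y), mcomp g h = 0 -> exists! u : Mor C W X, mcomp f u = h.

Definition is_cokernel (X Y Z : Ob C) (f : Mor C X Y) (g : Mor C Y Z) : Prop :=
  mcomp g f = 0 /\
  forall W (h : Mor C Y W), mcomp h f = 0 -> exists! u : Mor C Z W, mcomp u g = h.

Definition is_kernel_cokernel_pair (X Y Z : Ob C) (f : Mor C X Y) (g : Mor C Y Z) :=
  is_kernel f g /\ is_cokernel f g.

(** Pullback square   P --p'--> C'
                      |t'       |t
                      B  --p--> C0 *)
Definition is_pullback (B C0 C' P : Ob C) (p : Mor C B C0) (t : Mor C C' C0)
    (p' : Mor C P C') (t' : Mor C P B) : Prop :=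
  mcomp p t' = mcomp t p' /\
  forall W (u : Mor C W C') (v : Mor C W B), mcomp t u = mcomp p v ->
    exists! h : Mor C W P, mcomp p' h = u /\ mcomp t' h = v.

(** Pushout square    C0 --a--> D
                      |b        |b'
                      A0 --a'-> P   *)
Definition is_pushout (C0 D A0 P : Ob C) (a : Mor C C0 D) (b : Mor C C0 A0)
    (b' : Mor C D P) (a' : Mor C A0 P) : Prop :=
  mcomp b' a = mcomp a' b /\
  forall W (u : Mor C D W) (v : Mor C A0 W), mcomp u a = mcomp v b ->
    exists! h : Mor C P W, mcomp h b' = u /\ mcomp h a' = v.
End Notions.

Record ConflCat := {
  ccat :> AddCat;
  confl : forall X Y Z : Ob ccat, Mor ccat X Y -> Mor ccat Y Z -> Prop;
  confl_kc : forall X Y Z (f : Mor ccat X Y) (g : Mor ccat Y Z),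
      confl f g -> is_kernel_cokernel_pair f g;
  confl_iso : forall X Y Z X' Y' Z' (f : Mor ccat X Y) (g : Mor ccat Y Z)
      (f' : Mor ccat X' Y') (g' : Mor ccat Y' Z')
      (a : Mor ccat X X') (b : Mor ccat Y Y') (c : Mor ccat Z Z'),
      is_iso a -> is_iso b -> is_iso c ->
      mcomp b f = mcomp f' a -> mcomp c g = mcomp g' b ->
      confl f g -> confl f' g'
}.

Arguments confl {_ X Y Z} f g.

Section Conflations.
Variable C : ConflCat.

Definition inflation (X Y : Ob C) (f : Mor C X Y) : Prop :=
  exists Z (g : Mor C Y Z), confl f g.

Definition deflation (Y Z : Ob C) (g : Mor C Y Z) : Prop :=
  exists X (f : Mor C X Y), confl f g.

Definition axiom_R0 : Prop := deflation (idm (zero_ob C)).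

Definition axiom_R1 : Prop :=
  forall X Y Z (f : Mor C X Y) (g : Mor C Y Z),
    deflation f -> deflation g -> deflation (mcomp g f).

Definition axiom_R2 : Prop :=
  forall (B C0 C' : Ob C) (p : Mor C B C0) (t : Mor C C' C0),
    deflation p ->
    exists P (p' : Mor C P C') (t' : Mor C P B),
      is_pullback p t p' t' /\ deflation p'.

Definition deflation_exact : Prop := [/\ axiom_R0, axiom_R1 & axiom_R2].

(** A full subcategory is given by its class of objects A. *)
Definition axiom_A1 (A : Ob C -> Prop) : Prop :=
  forall X Y Z (f : Mor C X Y) (g : Mor C Y Z),
    confl f g -> (A Y <-> A X /\ A Z).

Definition axiom_A3 (A : Ob C -> Prop) : Prop :=
  forall (C0 D A0 : Ob C) (a : Mor C C0 D) (b : Mor C C0 A0),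
    inflation a -> deflation b -> A A0 ->
    exists P (b' : Mor C D P) (a' : Mor C A0 P),
      [/\ is_pushout a b b' a', deflation b' & inflation a'].

Definition A_inv_inflation (A : Ob C -> Prop) (X Y : Ob C) (f : Mor C X Y) : Prop :=
  exists Z (g : Mor C Y Z), confl f g /\ A Z.
End Conflations.

(* Let p : Y ->> P and q : Z ->> Q be cokernels of f and g, with P and Q in A.
   Pushing g out along p by (A3) gives a deflation p' : Z ->> E and an
   inflation g' : P >-> E.  Since g' is monic, g f is a kernel of p', so
   X >-> Z ->> E is a conflation; and pushouts preserve cokernels, so the map
   E -> Q induced by (q, 0) is a cokernel of g', whence P >-> E ->> Q is a
   conflation and E lies in A by (A1). *)
From Pilot Require Import Defs.
From mathcomp Require Import all_boot all_algebra.
Import GRing.Theory.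
Local Open Scope ring_scope.
Set Implicit Arguments. Unset Strict Implicit.

Section AdditiveCategory.
Variable C : AddCat.

Lemma comp0m X Y Z (f : Mor C X Y) : mcomp (0 : Mor C Y Z) f = 0.
Proof. by apply: (addrI (mcomp 0 f)); rewrite -compDl !addr0. Qed.

Lemma compm0 X Y Z (g : Mor C Y Z) : mcomp g (0 : Mor C X Y) = 0.
Proof. by apply: (addrI (mcomp g 0)); rewrite -compDr !addr0. Qed.

Lemma is_iso_idm X : is_iso (idm X : Mor C X X).
Proof. by exists (idm X); rewrite comp1m. Qed.

Definition monic X Y (f : Mor C X Y) :=
  forall W (x y : Mor C W X), mcomp f x = mcomp f y -> x = y.

Definition epic Y Z (g : Mor C Y Z) :=
  forall W (x y : Mor C Z W), mcomp x g = mcomp y g -> x = y.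

Lemma monic_comp X Y Z (f : Mor C X Y) (g : Mor C Y Z) :
  monic g -> monic f -> monic (mcomp g f).
Proof. by move=> g_monic f_monic W x y; rewrite -!Defs.compA => /g_monic/f_monic. Qed.

Lemma kernel_monic X Y Z (f : Mor C X Y) (g : Mor C Y Z) :
  is_kernel f g -> monic f.
Proof.
move=> [gf0 fU] W x y fx_fy.
have gfx0 : mcomp g (mcomp f x) = 0 by rewrite Defs.compA gf0 comp0m.
have [u [_ u_uniq]] := fU W _ gfx0.
by rewrite -(u_uniq x) // (u_uniq y).
Qed.

Lemma cokernel_epic X Y Z (f : Mor C X Y) (g : Mor C Y Z) :
  is_cokernel f g -> epic g.
Proof.
move=> [gf0 gU] W x y xg_yg.
have xgf0 : mcomp (mcomp x g) f = 0 by rewrite -Defs.compA gf0 compm0.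
have [u [_ u_uniq]] := gU W _ xgf0.
by rewrite -(u_uniq x) // (u_uniq y).
Qed.

Lemma kernel_unique X X' Y Z (f : Mor C X Y) (f' : Mor C X' Y) (g : Mor C Y Z) :
  is_kernel f g -> is_kernel f' g -> exists v : Mor C X' X, is_iso v /\ mcomp f v = f'.
Proof.
move=> Kf Kf'; have [gf0 fU] := Kf; have [gf'0 f'U] := Kf'.
have [v [fv _]] := fU _ f' gf'0.
have [u [f'u _]] := f'U _ f gf0.
exists v; split => //; exists u; split.
- by apply: (kernel_monic Kf'); rewrite Defs.compA f'u fv compm1.
- by apply: (kernel_monic Kf); rewrite Defs.compA fv f'u compm1.
Qed.

Lemma cokernel_unique X Y Z Z' (f : Mor C X Y) (g : Mor C Y Z) (g' : Mor C Y Z') :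
  is_cokernel f g -> is_cokernel f g' -> exists v : Mor C Z Z', is_iso v /\ mcomp v g = g'.
Proof.
move=> Cg Cg'; have [gf0 gU] := Cg; have [g'f0 g'U] := Cg'.
have [v [vg _]] := gU _ g' g'f0.
have [u [ug' _]] := g'U _ g gf0.
exists v; split => //; exists u; split.
- by apply: (cokernel_epic Cg); rewrite -Defs.compA vg ug' comp1m.
- by apply: (cokernel_epic Cg'); rewrite -Defs.compA ug' vg comp1m.
Qed.

Section Pushout.
Variables (Y Z P E : Ob C) (g : Mor C Y Z) (p : Mor C Y P).
Variables (p' : Mor C Z E) (g' : Mor C P E).
Hypothesis po : is_pushout g p p' g'.

Lemma pushout_ext W (x y : Mor C E W) :
  mcomp x p' = mcomp y p' -> mcomp x g' = mcomp y g' -> x = y.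
Proof.
move=> xp'_yp' xg'_yg'; have [po_comm poU] := po.
have yp'g : mcomp (mcomp y p') g = mcomp (mcomp y g') p by rewrite -!Defs.compA po_comm.
have [h [_ h_uniq]] := poU W _ _ yp'g.
by rewrite -(h_uniq x) // (h_uniq y).
Qed.

Lemma pushout_induced Q (q : Mor C Z Q) :
  mcomp q g = 0 -> exists r : Mor C E Q, mcomp r p' = q /\ mcomp r g' = 0.
Proof.
move=> qg0; have [_ poU] := po.
have qg_0p : mcomp q g = mcomp (0 : Mor C P Q) p by rewrite qg0 comp0m.
by have [r [rp'_rg' _]] := poU Q q 0 qg_0p; exists r.
Qed.

Lemma pushout_cokernel Q (q : Mor C Z Q) :
  is_cokernel g q -> exists r : Mor C E Q, is_cokernel g' r.
Proof.
move=> [qg0 qU]; have [po_comm _] := po.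
have [r [rp' rg'0]] := pushout_induced qg0.
exists r; split => // W h hg'0.
have hp'g0 : mcomp (mcomp h p') g = 0.
  by rewrite -Defs.compA po_comm Defs.compA hg'0 comp0m.
have [u [uq u_uniq]] := qU W _ hp'g0.
exists u; split.
- by apply: pushout_ext; rewrite -Defs.compA ?rp' ?rg'0 ?compm0.
- by move=> u' u'r; apply: u_uniq; rewrite -u'r -rp' Defs.compA.
Qed.

Lemma pushout_kernel_comp X Q (f : Mor C X Y) (q : Mor C Z Q) :
  is_kernel f p -> is_kernel g q -> monic g' -> is_kernel (mcomp g f) p'.
Proof.
move=> Kf Kg g'_monic; have [po_comm _] := po.
have [pf0 fU] := Kf; have [qg0 gU] := Kg.
have [r [rp' _]] := pushout_induced qg0.
split; first by rewrite Defs.compA po_comm -Defs.compA pf0 compm0.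
move=> W h p'h0.
have qh0 : mcomp q h = 0 by rewrite -rp' -Defs.compA p'h0 compm0.
have [v [gv _]] := gU W h qh0.
have pv0 : mcomp p v = 0.
  by apply: g'_monic; rewrite compm0 Defs.compA -po_comm -Defs.compA gv.
have [u [fu _]] := fU W v pv0.
exists u; split; first by rewrite -Defs.compA fu gv.
move=> u' gfu'; apply: (monic_comp (kernel_monic Kg) (kernel_monic Kf)).
by rewrite gfu' -Defs.compA fu gv.
Qed.

End Pushout.
End AdditiveCategory.

Section ConflationCategory.
Variable C : ConflCat.

Lemma confl_of_kernel X X' Y Z (f : Mor C X Y) (f' : Mor C X' Y) (g : Mor C Y Z) :
  confl f g -> is_kernel f' g -> confl f' g.
Proof.
move=> cfg Kf'; have [Kf _] := confl_kc cfg.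
have [v [iso_v f'v]] := kernel_unique Kf' Kf.
apply: (confl_iso iso_v (is_iso_idm _) (is_iso_idm _) _ _ cfg).
- by rewrite comp1m f'v.
- by rewrite comp1m compm1.
Qed.

Lemma confl_of_cokernel X Y Z Z' (f : Mor C X Y) (g : Mor C Y Z) (g' : Mor C Y Z') :
  confl f g -> is_cokernel f g' -> confl f g'.
Proof.
move=> cfg Cg'; have [_ Cg] := confl_kc cfg.
have [v [iso_v vg]] := cokernel_unique Cg Cg'.
apply: (confl_iso (is_iso_idm _) (is_iso_idm _) iso_v _ _ cfg).
- by rewrite comp1m compm1.
- by rewrite compm1 vg.
Qed.

End ConflationCategory.

Theorem mainTheorem9 (C : ConflCat) (A : Ob C -> Prop) :
  deflation_exact C -> axiom_A1 A -> axiom_A3 A ->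
  forall (X Y Z : Ob C) (f : Mor C X Y) (g : Mor C Y Z),
    A_inv_inflation A f -> A_inv_inflation A g ->
    A_inv_inflation A (mcomp g f).
Proof.
move=> _ A1 A3 X Y Z f g [P [p [cfp AP]]] [Q [q [cgq AQ]]].
have [Kf _] := confl_kc cfp; have [Kg Cg] := confl_kc cgq.
have infl_g : inflation g by exists Q, q.
have defl_p : deflation p by exists X, f.
have [E [p' [g' [po [K [k ckp']] [Q' [s cg's]]]]]] := A3 _ _ _ _ _ infl_g defl_p AP.
have g'_monic : monic g' := kernel_monic (confl_kc cg's).1.
have [r Cr] := pushout_cokernel po Cg.
exists E, p'; split.
- exact: confl_of_kernel ckp' (pushout_kernel_comp po Kf Kg g'_monic).
- by apply/(A1 _ _ _ _ _ (confl_of_cokernel cg's Cr)).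
Qed.
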